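(* Let $A\in\mathbb{R}^{n\times n}$ be symmetric positive definite, $M_0\in\mathbb{R}^{n\times n}$, $R_0=I_n-AM_0$ and $G_0=-AR_0$. For $i\ge1$ let $\mathcal{K}_i(A^2,G_0)=\mathrm{span}\{G_0,A^2G_0,\dots,A^{2(i-1)}G_0\}$. Then a matrix $M_i\in M_0+\mathcal{K}_i(A^2,G_0)$ satisfies $R_i:=I_n-AM_i\perp\mathcal{K}_i(A^2,G_0)$ if and only if $$\|A^{-1}-M_i\|_{F,A}=\min_{M\in M_0+\mathcal{K}_i(A^2,G_0)}\|A^{-1}-M\|_{F,A}.$$ In particular, the NCG iterates (which satisfy the former condition) minimize the Frobenius $A$-norm of the error over $M_0+\mathcal{K}_i(A^2,G_0)$.
   Context: The Frobenius inner product is $(X,Y)_F=\operatorname{tr}(X^TY)$ and $\perp$ denotes orthogonality with respect to it. The Frobenius inner product weighted by $A$ is $(X,Y)_{F,A}:=(AX,Y)_F$, with induced norm $\|X\|_{F,A}:=(X,X)_{F,A}^{1/2}$. The NCG method: $R_i=I_n-AM_i$, $G_i=-AR_i$, $P_0=-G_0$; for $i\ge1$, $P_i\in -G_i+\mathrm{span}\{P_{i-1}\}$ with $(P_i,AP_{i-1})_F=0$; for $i\ge0$, $M_{i+1}\in M_i+\mathrm{span}\{P_i\}$ with $(R_{i+1},P_i)_F=0$ (no breakdown assumed). *)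

From HB Require Import structures.
From mathcomp Require Import all_boot all_order all_algebra.
Set Implicit Arguments. Unset Strict Implicit. Unset Printing Implicit Defensive.
Import Order.TTheory GRing.Theory Num.Theory.
Local Open Scope ring_scope.

Definition frob {R : rcfType} {n : nat} (X Y : 'M[R]_n) : R := \tr (X^T *m Y).

Definition frobA {R : rcfType} {n : nat} (A X Y : 'M[R]_n) : R := frob (A *m X) Y.

Definition normFA {R : rcfType} {n : nat} (A X : 'M[R]_n) : R :=
  Num.sqrt (frobA A X X).

Definition spd {R : rcfType} {n : nat} (A : 'M[R]_n) : Prop :=
  A^T = A /\ forall x : 'cV[R]_n, x != 0 -> 0 < (x^T *m A *m x) 0 0.

Definition in_krylov2 {R : rcfType} {n : nat} (A G : 'M[R]_n) (i : nat)
    (X : 'M[R]_n) : Prop :=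
  exists c : 'I_i -> R, X = \sum_(k < i) c k *: ((A *m A) ^+ k *m G).

Definition perp_krylov2 {R : rcfType} {n : nat} (A G : 'M[R]_n) (i : nat)
    (Y : 'M[R]_n) : Prop :=
  forall X, in_krylov2 A G i X -> frob Y X = 0.

From HB Require Import structures.
From mathcomp Require Import all_boot all_order all_algebra.
From mathcomp Require Import ring lra.
Import Order.TTheory GRing.Theory Num.Theory.
Local Open Scope ring_scope.
Set Implicit Arguments. Unset Strict Implicit.

(* With E := A^-1 - M_i we have A E = R_i, so for every D
     ||E + D||_{F,A}^2 = ||E||_{F,A}^2 + 2 (R_i, D)_F + ||D||_{F,A}^2.
   If R_i is orthogonal to the Krylov space the middle term vanishes and M_i
   is optimal.  Conversely, if M_i is optimal, taking D = t X for X in the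
   Krylov space gives 0 <= 2 t (R_i, X)_F + t^2 ||X||_{F,A}^2 for every real
   t, which forces (R_i, X)_F = 0. *)

Lemma quadratic_ge0_lin_coef_eq0 (R : realFieldType) (a b : R) :
  (forall t, 0 <= t * b + t ^+ 2 * a) -> b = 0.
Proof.
move=> ge0.
have a_ge0 : 0 <= a.
  by have := ge0 1; have := ge0 (-1); rewrite sqrrN expr1n !mul1r mulN1r; lra.
(* Evaluate at t = -b/(a+1); the shift by 1 keeps the denominator nonzero when a = 0. *)
have a1_neq0 : a + 1 != 0 by rewrite gt_eqF // ltr_wpDl.
have : 0 <= (a + 1) ^+ 2 * (- b / (a + 1) * b + (- b / (a + 1)) ^+ 2 * a).
  by rewrite mulr_ge0 ?sqr_ge0.
have -> : (a + 1) ^+ 2 * (- b / (a + 1) * b + (- b / (a + 1)) ^+ 2 * a) = - b ^+ 2.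
  by field.
rewrite oppr_ge0 => b2_le0; apply/eqP.
by rewrite -sqrf_eq0 eq_le b2_le0 sqr_ge0.
Qed.

Section Frobenius.
Variables (R : rcfType) (n : nat).
Implicit Types (A X Y Z : 'M[R]_n).

Lemma frobC X Y : frob X Y = frob Y X.
Proof. by rewrite /frob -mxtrace_tr trmx_mul trmxK. Qed.

Lemma frobDr X Y Z : frob X (Y + Z) = frob X Y + frob X Z.
Proof. by rewrite /frob mulmxDr mxtraceD. Qed.

Lemma frobDl X Y Z : frob (Y + Z) X = frob Y X + frob Z X.
Proof. by rewrite frobC frobDr !(frobC X). Qed.

Lemma frobZr a X Y : frob X (a *: Y) = a * frob X Y.
Proof. by rewrite /frob -scalemxAr mxtraceZ. Qed.

Lemma frobZl a X Y : frob (a *: X) Y = a * frob X Y.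
Proof. by rewrite frobC frobZr frobC. Qed.

Lemma frob_sym_mulmx A X Y : A^T = A -> frob (A *m X) Y = frob X (A *m Y).
Proof. by move=> AT; rewrite /frob trmx_mul AT mulmxA. Qed.

Lemma frob_mulmx_ge0 A X : (forall x : 'cV[R]_n, 0 <= (x^T *m A *m x) 0 0) ->
  0 <= frob X (A *m X).
Proof.
move=> psdA; rewrite /frob mulmxA /mxtrace; apply: sumr_ge0 => j _.
have -> : (X^T *m A *m X) j j = ((col j X)^T *m A *m col j X) 0 0.
  rewrite !mxE; apply: eq_bigr => l _; rewrite !mxE; congr (_ * _).
  by apply: eq_bigr => k _; rewrite !mxE.
exact: psdA.
Qed.

Lemma spd_psd A : spd A -> forall x : 'cV[R]_n, 0 <= (x^T *m A *m x) 0 0.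
Proof.
case=> _ pdA x; have [->|x_neq0] := eqVneq x 0; last exact/ltW/pdA.
by rewrite mulmx0 mxE.
Qed.

Lemma spd_unitmx A : spd A -> A \in unitmx.
Proof.
case=> _ pdA; rewrite unitmxE unitfE; apply/negP => /det0P [v v_neq0 vA].
have := pdA v^T; rewrite trmx_eq0 => /(_ v_neq0).
by rewrite trmxK vA mul0mx mxE ltxx.
Qed.

End Frobenius.

Section BestApproximation.
Variables (R : rcfType) (n : nat) (A : 'M[R]_n).
Hypotheses (symA : A^T = A) (psdA : forall x : 'cV[R]_n, 0 <= (x^T *m A *m x) 0 0).

Lemma frobA_ge0 X : 0 <= frobA A X X.
Proof. by rewrite /frobA frobC; exact: frob_mulmx_ge0. Qed.

Lemma frobA_expand E D :
  frobA A (E + D) (E + D) = frobA A E E + 2 * frob (A *m E) D + frobA A D D.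
Proof.
rewrite /frobA mulmxDr frobDl !frobDr.
rewrite [frob (A *m D) E](frob_sym_mulmx _ _ symA) [frob D _]frobC.
by rewrite mulr2n mulrDl mul1r; ring.
Qed.

Lemma normFA_le E D : (normFA A E <= normFA A (E + D)) =
  (0 <= 2 * frob (A *m E) D + frobA A D D).
Proof. by rewrite /normFA ler_sqrt ?frobA_ge0 // frobA_expand -addrA lerDl. Qed.

Lemma frob_orth_iff_normFA_min (K : 'M[R]_n -> Prop) E :
  (forall a X, K X -> K (a *: X)) ->
  (forall D, K D -> frob (A *m E) D = 0) <->
  (forall D, K D -> normFA A E <= normFA A (E + D)).
Proof.
move=> scaleK; split=> [orthE D KD | minE X KX].
  by rewrite normFA_le orthE // mulr0 add0r frobA_ge0.
have /quadratic_ge0_lin_coef_eq0 /eqP : forall t,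
    0 <= t * (2 * frob (A *m E) X) + t ^+ 2 * frobA A X X.
  move=> t; have := minE _ (scaleK t _ KX).
  rewrite normFA_le /frobA -scalemxAr frobZl !frobZr.
  suff -> : 2 * (t * frob (A *m E) X) + t * (t * frob (A *m X) X) =
            t * (2 * frob (A *m E) X) + t ^+ 2 * frob (A *m X) X by [].
  by ring.
by rewrite mulf_eq0 pnatr_eq0 => /eqP.
Qed.

End BestApproximation.

Section Krylov.
Variables (R : rcfType) (n : nat) (A G : 'M[R]_n) (i : nat).

Lemma in_krylov2B X Y : in_krylov2 A G i X -> in_krylov2 A G i Y ->
  in_krylov2 A G i (X - Y).
Proof.
move=> [c ->] [d ->]; exists (fun k => c k - d k).
by rewrite -sumrB; apply: eq_bigr => k _; rewrite scalerBl.
Qed.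

Lemma in_krylov2Z a X : in_krylov2 A G i X -> in_krylov2 A G i (a *: X).
Proof.
move=> [c ->]; exists (fun k => a * c k).
by rewrite scaler_sumr; apply: eq_bigr => k _; rewrite scalerA.
Qed.

End Krylov.

Theorem theorem3 (R : rcfType) (n : nat) (A M0 : 'M[R]_n) (i : nat) (Mi : 'M[R]_n) :
  spd A -> (1 <= i)%N ->
  let R0 := 1%:M - A *m M0 in
  let G0 := - (A *m R0) in
  in_krylov2 A G0 i (Mi - M0) ->
  (perp_krylov2 A G0 i (1%:M - A *m Mi) <->
   forall M : 'M[R]_n, in_krylov2 A G0 i (M - M0) ->
     normFA A (invmx A - Mi) <= normFA A (invmx A - M)).
Proof.
move=> spdA _ R0 G0 KMi.
have residualE : A *m (invmx A - Mi) = 1%:M - A *m Mi.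
  by rewrite mulmxBr mulmxV // spd_unitmx.
rewrite /perp_krylov2 -residualE.
rewrite (frob_orth_iff_normFA_min spdA.1 (spd_psd spdA) _ (@in_krylov2Z _ _ _ _ _)).
have errorE M : invmx A - M = (invmx A - Mi) + (Mi - M) by rewrite addrA subrK.
split=> [minMi M KM | minMi D KD].
  rewrite (errorE M); apply: minMi.
  have -> : Mi - M = (Mi - M0) - (M - M0) by rewrite opprB addrA subrK.
  exact: in_krylov2B.
have := minMi (Mi - D); rewrite (errorE (Mi - D)) subKr; apply.
by rewrite addrAC; apply: in_krylov2B.
Qed.
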